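(* Let $\tau\in(0,1]$ and suppose $k\,\alpha^{(2-\tau)d}\ge 2$. Let $u,v\in V$ be distinct with $|\Gamma(u)\cap\Gamma(v)|\ge\tau d$. Then, under the Fast-Filter model described in the context, the expected number of indices $i\in[k]$ with $u\in S_i$ and $v\in S_i$ is at least $2$.
   Context: Let $G=(U,V,E)$ be a bipartite graph with $|U|=M$ and $|V|=N$. For $v\in V$ let $\Gamma(v)\subseteq U$ be its set of neighbours, and assume $|\Gamma(v)|=d\ge 1$ for every $v\in V$. Let $k=2^{m}$ and $\alpha=2^{-r}$, where $m,r$ are positive integers. Identify $[k]=\{1,\dots,k\}$ bijectively with the vector space $\mathrm{GF}(2)^m$ (for instance via the binary representation of $i-1$). Fast-Filter model: for each $u\in U$, independently draw a uniformly random matrix $A'_u\in\mathrm{GF}(2)^{r\times m}$ and a uniformly random vector $b'_u\in\mathrm{GF}(2)^{r}$; all of these are mutually independent. For $v\in V$, let $A^v$ be the $(dr)\times m$ matrix obtained by stacking the matrices $A'_u$, $u\in\Gamma(v)$, in a fixed order, and let $b^v\in\mathrm{GF}(2)^{dr}$ be obtained by stacking the $b'_u$, $u\in\Gamma(v)$, in the same order. For $i\in[k]$ (viewed as a vector in $\mathrm{GF}(2)^m$), the survival set is $S_i=\{v\in V: A^v i+b^v=0\}$, with arithmetic over $\mathrm{GF}(2)$. *)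

From Stdlib Require Import Reals.
Section RealConds.
Local Open Scope R_scope.
(* k = 2^m, alpha = 2^(-r); hypothesis  k * alpha^((2 - tau) d) >= 2  (real exponent) *)
Definition size_cond (m r d : nat) (tau : R) : Prop :=
  INR (2 ^ m) * Rpower (Rpower 2 (- INR r)) ((2 - tau) * INR d) >= 2.
Definition tau_range (tau : R) : Prop := 0 < tau <= 1.
Definition overlap_cond (c d : nat) (tau : R) : Prop := INR c >= tau * INR d.
End RealConds.

From HB Require Import structures.
From mathcomp Require Import all_boot all_order all_algebra.

Set Implicit Arguments.
Unset Strict Implicit.
Unset Printing Implicit Defensive.

Local Open Scope ring_scope.

(* A sample point of the Fast-Filter model: for each u in U, a pair
   (A'_u, b'_u) in GF(2)^{r x m} x GF(2)^r.  The probability space is the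
   uniform distribution on this finite type. *)
Definition FFsample (U : finType) (r m : nat) : finType :=
  {ffun U -> 'M['F_2]_(r, m) * 'cV['F_2]_r}%type.

(* v survives for index i (viewed as a vector of GF(2)^m): A^v i + b^v = 0,
   where A^v, b^v stack the blocks A'_u, b'_u for u in Gamma(v); the stacked
   system vanishes iff every block equation vanishes. *)
Definition survives (U V : finType) (r m : nat) (Gamma : V -> {set U})
  (w : FFsample U r m) (i : 'cV['F_2]_m) (v : V) : bool :=
  [forall x in Gamma v, ((w x).1 *m i + (w x).2 == 0)].

(* number of indices i in [k] = GF(2)^m with both u and v in S_i *)
Definition joint_count (U V : finType) (r m : nat) (Gamma : V -> {set U})
  (w : FFsample U r m) (u v : V) : nat :=
  #|[set i : 'cV['F_2]_m | survives Gamma w i u && survives Gamma w i v]|.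

Definition expected_joint (U V : finType) (r m : nat) (Gamma : V -> {set U})
  (u v : V) : rat :=
  (\sum_(w : FFsample U r m) (joint_count Gamma w u v)%:R) / (#|FFsample U r m|)%:R.

(* For a fixed index i, both u and v survive iff the block equation
   A'_x i + b'_x = 0 holds for every x in W = Gamma(u) :|: Gamma(v); for each x
   this has probability 2^-r (b'_x is determined by A'_x), independently in x.
   Summing over the 2^m indices, the expected joint count is 2^(m - r|W|),
   and |W| = 2d - |Gamma(u) :&: Gamma(v)| <= (2 - tau) d turns the size
   condition into 2 * 2^(r|W|) <= 2^m. *)
From Stdlib Require Import Reals Lra ssreflect.

Section SizeCondition.
Local Open Scope R_scope.

Lemma size_cond_pow2_le {m r d w c : nat} {tau : R} :
  (w + c = 2 * d)%nat -> overlap_cond c d tau -> size_cond m r d tau ->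
  (2 * 2 ^ (r * w) <= 2 ^ m)%nat.
Proof.
move=> hwc; rewrite /overlap_cond /size_cond Rpower_mult => hc hk.
have hw : INR w = 2 * INR d - INR c.
  by have := f_equal INR hwc; rewrite plus_INR mult_INR /=; lra.
set e := - INR r * ((2 - tau) * INR d) in hk.
have hrw : INR (r * w) <= - e by rewrite /e mult_INR hw; have := pos_INR r; nra.
have h2rw : 2 ^ (r * w) <= Rpower 2 (- e).
  by rewrite -Rpower_pow; [apply: Rle_Rpower|]; lra.
have hinv : Rpower 2 e * Rpower 2 (- e) = 1.
  by rewrite -Rpower_plus Rplus_opp_r Rpower_O; lra.
have he : 0 < Rpower 2 e by apply: exp_pos.
have h2m : 2 * Rpower 2 (- e) <= INR (2 ^ m).
  by rewrite -(Rmult_1_l (INR _)) -hinv; nra.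
have two : INR 2 = 2 by rewrite /=; lra.
apply/INR_le; rewrite mult_INR !pow_INR two in h2m *; lra.
Qed.

End SizeCondition.

From HB Require Import structures.
From mathcomp Require Import all_boot all_order all_algebra.
Import GRing.Theory Num.Theory.
Local Open Scope ring_scope.

(* [size_cond] is phrased with Stdlib's [Nat.pow], which is not [expn]. *)
Lemma Nat_powE (a n : nat) : Nat.pow a n = (a ^ n)%N.
Proof. by elim: n => [|n IH] //=; rewrite expnS IH. Qed.

Lemma card_ffun_forall_in (U T : finType) (P : pred T) (W : {set U}) :
  #|[set f : {ffun U -> T} | [forall x in W, P (f x)]]| =
  (#|P| ^ #|W| * #|T| ^ #|~: W|)%N.
Proof.
pose F x := [pred y : T | (x \in W) ==> P y].
have -> : #|[set f : {ffun U -> T} | [forall x in W, P (f x)]]| = #|family F|.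
  by apply: eq_card => f; rewrite inE; apply: eq_forallb => x.
rewrite card_family foldrE big_image /= (bigID (mem W)) /=.
rewrite (eq_bigr (fun=> #|P|)) => [|x xW]; last first.
  by apply: eq_card => y; rewrite unfold_in /= xW.
rewrite [X in (_ * X)%N](eq_bigr (fun=> #|T|)) => [|x xW]; last first.
  by apply: eq_card => y; rewrite unfold_in /= (negbTE xW).
by rewrite !prod_nat_const; congr (_ * _ ^ _)%N; apply: eq_card => x; rewrite inE.
Qed.

Lemma sum_card_swap (I J : finType) (P : I -> J -> bool) :
  (\sum_(i : I) #|[set j | P i j]| = \sum_(j : J) #|[set i | P i j]|)%N.
Proof.
under eq_bigr => i _ do rewrite -sum1dep_card big_mkcond.
rewrite exchange_big /=; apply: eq_bigr => j _.
by rewrite -big_mkcond sum1dep_card; apply: eq_card => i; rewrite inE.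
Qed.

Lemma card_affine_kernel (R : finPzRingType) (r m : nat) (i : 'cV[R]_m) :
  #|[pred p : ('M[R]_(r, m) * 'cV[R]_r)%type | p.1 *m i + p.2 == 0]| =
  #|'M[R]_(r, m)|.
Proof.
rewrite -(card_image (f := fun A : 'M[R]_(r, m) => (A, - (A *m i)))); last first.
  by move=> A B [].
apply: eq_card => -[A b]; rewrite inE /=; apply/idP/imageP => [hAb | [A' _ [-> ->]]].
  by exists A => //; move: hAb; rewrite addrC addr_eq0 => /eqP ->.
by rewrite subrr.
Qed.

Lemma survives_both (U V : finType) (r m : nat) (Gamma : V -> {set U})
    (w : FFsample U r m) (i : 'cV['F_2]_m) (u v : V) :
  survives Gamma w i u && survives Gamma w i v =
  [forall x in Gamma u :|: Gamma v, (w x).1 *m i + (w x).2 == 0].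
Proof.
apply/andP/forall_inP => [[/forall_inP hu /forall_inP hv] x | h].
  by rewrite inE => /orP[/hu | /hv].
by split; apply/forall_inP => x hx; apply: h; rewrite inE hx ?orbT.
Qed.

Lemma expected_jointE (U V : finType) (r m : nat) (Gamma : V -> {set U})
    (u v : V) :
  expected_joint r m Gamma u v =
  (2 ^ m)%:R / (2 ^ (r * #|Gamma u :|: Gamma v|))%:R :> rat.
Proof.
set W := Gamma u :|: Gamma v.
set a := #|'M['F_2]_(r, m)|.
have card_F2 n k : #|'M['F_2]_(n, k)| = (2 ^ (n * k))%N by rewrite card_mx card_Fp.
have card_cV n : #|'cV['F_2]_n| = (2 ^ n)%N by rewrite card_F2 muln1.
set K := (a ^ #|W| * (a * 2 ^ r) ^ #|~: W|)%N.
have a_gt0 : (0 < a)%N by rewrite /a card_F2 expn_gt0.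
have K_gt0 : (0 < K)%N by rewrite muln_gt0 !expn_gt0 muln_gt0 a_gt0 expn_gt0.
have hsum : (\sum_(w : FFsample U r m) joint_count Gamma w u v = 2 ^ m * K)%N.
  rewrite /joint_count sum_card_swap.
  under eq_bigr => i _.
    pose Pi := [pred p : 'M['F_2]_(r, m) * 'cV['F_2]_r | p.1 *m i + p.2 == 0].
    rewrite (eq_card (B := [set w : FFsample U r m | [forall x in W, Pi (w x)]]));
      last by move=> w; rewrite !inE survives_both.
    rewrite card_ffun_forall_in card_affine_kernel card_prod card_cV -/a.
  over.
  by rewrite sum_nat_const card_cV.
have hsize : #|FFsample U r m| = (2 ^ (r * #|W|) * K)%N.
  rewrite card_ffun card_prod card_cV -/a -(cardsC W) expnD expnMn.
  by rewrite /K expnM [RHS]mulnCA mulnA.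
rewrite /expected_joint -natr_sum hsum hsize !natrM -mulf_div divff ?mulr1 //.
by rewrite -natrM pnatr_eq0 -lt0n.
Qed.

Theorem lemma1 (U V : finType) (Gamma : V -> {set U}) (d m r : nat)
  (tau : Rdefinitions.R)
  (hd : forall x : V, #|Gamma x| = d) (hd1 : (1 <= d)%N)
  (hm : (0 < m)%N) (hr : (0 < r)%N)
  (htau : tau_range tau)
  (hk : size_cond m r d tau)
  (u v : V) (huv : u != v)
  (hint : overlap_cond #|Gamma u :&: Gamma v| d tau) :
  (2%:R <= expected_joint r m Gamma u v :> rat)%R.
Proof.
have hW : (#|Gamma u :|: Gamma v| + #|Gamma u :&: Gamma v| = 2 * d)%N.
  by rewrite cardsUI !hd mul2n addnn.
have /leP := size_cond_pow2_le hW hint hk; rewrite multE !Nat_powE => h2.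
by rewrite expected_jointE ler_pdivlMr ?ltr0n ?expn_gt0 // -natrM ler_nat.
Qed.
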